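(* Let $(P_1,\dots,P_J)$ and $(P^*_1,\dots,P^*_J)$ be two stochastic demand systems for the budget planes $\mathcal{B}_1,\dots,\mathcal{B}_J$ such that $P_j(x)=P^*_j(x)$ for every $j\in\{1,\dots,J\}$ and every patch $x\subseteq \mathcal{B}_j$. Then $(P_1,\dots,P_J)$ is stochastically rationalizable if and only if $(P^*_1,\dots,P^*_J)$ is stochastically rationalizable. In particular, this applies when $(P^*_1,\dots,P^*_J)$ is concentrated on the fixed representatives, i.e. when each $P^*_j$ assigns probability $P_j(x)$ to the representative point $y^*(x)$ of each patch $x\subseteq\mathcal{B}_j$.
   Context: Fix integers $K\ge 1$ (number of goods) and $J\ge 1$, price vectors $p_1,\dots,p_J\in\mathbf{R}^K_{++}$, and budget planes $\mathcal{B}_j=\{y\in\mathbf{R}^K_+: p_j'y=1\}$. A point $x$ is on, strictly above, or strictly below $\mathcal{B}_j$ according as $p_j'x=1$, $p_j'x>1$, or $p_j'x<1$. A (nonstochastic) demand vector is $d=(d_1,\dots,d_J)\in\mathcal{B}_1\times\cdots\times\mathcal{B}_J$; it is rationalizable if there is a utility function $u:\mathbf{R}^K_+\to\mathbf{R}$, strictly increasing (''more is better''), with $d_j\in\arg\max_{x\in\mathcal{B}_j}u(x)$ for every $j$. A stochastic demand system is a tuple $(P_1,\dots,P_J)$ where $P_j$ is a probability distribution on $\mathcal{B}_j$; it is stochastically rationalizable if there is a probability distribution on $\mathcal{B}_1\times\cdots\times\mathcal{B}_J$, concentrated on the set of rationalizable demand vectors, whose $j$-th marginal is $P_j$ for every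 $j$ (equivalently, the $P_j$ are the distributions of demand on $\mathcal{B}_j$ generated by a population distribution over utility functions). Patches: the coarsest partition of $\bigcup_{j}\mathcal{B}_j$ such that each $\mathcal{B}_j$ is a union of cells and each cell is, for every $j$, entirely on, entirely strictly above, or entirely strictly below $\mathcal{B}_j$ (equivalently, two points of $\bigcup_j\mathcal{B}_j$ lie in the same patch iff they have the same vector of signs $(\mathrm{sign}(p_j'x-1))_{j=1}^J$). There are finitely many patches; for each patch $x$ fix, once and for all, a representative point $y^*(x)\in x$. *)

From HB Require Import structures.
From mathcomp Require Import all_boot all_order all_algebra.
From mathcomp Require Import all_classical all_reals all_analysis.
Import Order.TTheory GRing.Theory Num.Theory.
Import numFieldNormedType.Exports.

Set Implicit Arguments.
Unset Strict Implicit.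
Unset Printing Implicit Defensive.

Local Open Scope classical_set_scope.
Local Open Scope ring_scope.

Definition goods (R : realType) (K : nat) :=
  g_sigma_algebraType (open : set_system 'rV[R]_K).

(* Space of demand vectors (d_1,...,d_J), d_j = row j, i.e. (R^K)^J,
   with its Borel sigma-algebra (= product Borel sigma-algebra). *)
Definition demands (R : realType) (J K : nat) :=
  g_sigma_algebraType (open : set_system 'M[R]_(J, K)).

Definition dotp (R : realType) (K : nat) (p x : 'rV[R]_K) : R :=
  \sum_(i < K) p 0 i * x 0 i.

Definition nonneg (R : realType) (K : nat) (x : 'rV[R]_K) : Prop :=
  forall i, 0 <= x 0 i.

Definition strictly_pos (R : realType) (K : nat) (x : 'rV[R]_K) : Prop :=
  forall i, 0 < x 0 i.

Definition budget (R : realType) (J K : nat) (p : 'I_J -> 'rV[R]_K) (j : 'I_J)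
  : set 'rV[R]_K := [set y | nonneg y /\ dotp (p j) y = 1].

Definition more_is_better (R : realType) (K : nat) (u : 'rV[R]_K -> R) : Prop :=
  forall x y, nonneg x -> nonneg y -> (forall i, x 0 i <= y 0 i) -> x <> y ->
    u x < u y.

Definition rationalizable (R : realType) (J K : nat) (p : 'I_J -> 'rV[R]_K)
  (d : 'M[R]_(J, K)) : Prop :=
  exists u : 'rV[R]_K -> R, more_is_better u /\
    forall j, budget p j (row j d) /\
      forall x, budget p j x -> u x <= u (row j d).

Definition stoch_demand_system (R : realType) (J K : nat)
  (p : 'I_J -> 'rV[R]_K) (P : 'I_J -> probability (goods R K) R) : Prop :=
  forall j, P j (budget p j : set (goods R K)) = 1%E.

Definition stoch_rationalizable (R : realType) (J K : nat)
  (p : 'I_J -> 'rV[R]_K) (P : 'I_J -> probability (goods R K) R) : Prop :=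
  exists mu : probability (demands R J K) R,
    (exists A : set (demands R J K),
        measurable A /\ A `<=` rationalizable p /\ mu A = 1%E) /\
    forall (j : 'I_J) (S : set (goods R K)), measurable S ->
      mu ((fun d : demands R J K => (row j d : goods R K)) @^-1` S) = P j S.

Definition budget_union (R : realType) (J K : nat) (p : 'I_J -> 'rV[R]_K)
  : set 'rV[R]_K := [set y | exists j, budget p j y].

Definition sign_vector (R : realType) (J K : nat) (p : 'I_J -> 'rV[R]_K)
  (y : 'rV[R]_K) : 'I_J -> R := fun j => Num.sg (dotp (p j) y - 1).

Definition patch_of (R : realType) (J K : nat) (p : 'I_J -> 'rV[R]_K)
  (y : 'rV[R]_K) : set 'rV[R]_K :=
  [set z | budget_union p z /\ sign_vector p z = sign_vector p y].

Definition is_patch (R : realType) (J K : nat) (p : 'I_J -> 'rV[R]_K)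
  (x : set 'rV[R]_K) : Prop :=
  exists y, budget_union p y /\ x = patch_of p y.

From HB Require Import structures.
From mathcomp Require Import all_boot all_order all_algebra.
From mathcomp Require Import all_classical all_reals all_analysis.
From mathcomp Require Import measurable_realfun lra.
Import Order.TTheory GRing.Theory Num.Theory.
Import numFieldNormedType.Exports.

Set Implicit Arguments.
Unset Strict Implicit.
Unset Printing Implicit Defensive.

Local Open Scope classical_set_scope.
Local Open Scope ring_scope.

(** Patches are the cells of the sign pattern of [(p_j'y - 1)_j], and whether a
demand vector is rationalizable depends only on the cells of its rows.  Indeed, by
strict monotonicity a rationalizing utility yields levels [U_j] with [U_j <= U_k]
when [d_j] lies on [B_k] and [U_j < U_k] when it lies strictly below [B_k];
conversely such levels are rationalized by the Afriat-type utility
[x |-> min_k phi_k(p_k'x)].  So if [P_j] and [P*_j] give the same mass to every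
cell, a rationalizing distribution for [P] becomes one for [P*] by keeping the
cell of every row [d_j] and redrawing [d_j], independently, from [P*_j]
conditioned on that cell.  For the second statement, [P_j x = P*_j {y*(x)} <=
P*_j x] on every patch, and two probabilities that compare pointwise on the cells
of a finite partition agree on them. *)

(** * Borel sets of matrices *)

Section borel_matrix.
Variable R : realType.

Definition borel_mx (m n : nat) := g_sigma_algebraType (open : set_system 'M[R]_(m, n)).

Lemma measurable_mx_coord m n i j :
  measurable_fun [set: borel_mx m n] (fun M : borel_mx m n => M i j : R).
Proof.
apply: (measurability _ (RGenOpens.measurableE R)).
move=> _ [_ [a [b ->]] <-]; apply: sub_sigma_algebra; rewrite setTI.
by have /continuousP := @coord_continuous R m n i j; apply; exact: interval_open.
Qed.

Lemma open_bigcup_rat_balls m n (U : set 'M[R]_(m, n)) : open U ->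
  U = \bigcup_(z : 'M[rat]_(m, n) * rat)
        (if `[< ball (map_mx (@ratr R) z.1) (ratr z.2 : R) `<=` U >]
         then ball (map_mx (@ratr R) z.1) (ratr z.2 : R) else set0).
Proof.
move=> oU; apply/seteqP; split; last first.
  by move=> A [z _]; case: ifPn => [/asboolP|//]; apply.
move=> A UA; have /nbhs_ballP[e /= e0 eU] : nbhs A U by exact: open_nbhs_nbhs.
have [r] : exists r : rat, ratr r \in `]0, e / 2[ by apply: rat_in_itvoo; rewrite divr_gt0.
rewrite in_itv /= => /andP[r0 re].
have /choice[c cA] : forall ij : 'I_m * 'I_n, exists q : rat,
    ratr q \in `](A ij.1 ij.2 - ratr r), (A ij.1 ij.2 + ratr r)[.
  by move=> ij; apply: rat_in_itvoo; rewrite ltrBlDr -addrA ltrDl addr_gt0.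
pose C := \matrix_(i, j) c (i, j).
have CA : ball (map_mx (@ratr R) C) (ratr r) A.
  split => // i j; rewrite -ball_normE /= !mxE.
  by have := cA (i, j); rewrite in_itv /= ltr_norml => /andP[? ?]; apply/andP; split; lra.
exists (C, r) => //; rewrite ifT //; apply/asboolP => B CB; apply: eU.
apply: le_ball (ball_triangle (ball_sym CA) CB); lra.
Qed.

Lemma measurable_fun_mx d (T : measurableType d) m n (f : T -> borel_mx m n) :
  (forall i j, measurable_fun [set: T] (fun t => f t i j)) ->
  measurable_fun [set: T] f.
Proof.
move=> mf; apply: (measurability _ (erefl (@measurable _ (borel_mx m n)))).
move=> _ [U oU <-]; rewrite setTI (open_bigcup_rat_balls oU) preimage_bigcup.
apply: countable_bigcupT_measurable; first exact: countableP.
move=> z; case: ifPn => _; last by rewrite preimage_set0.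
set M := map_mx _ _; set e := ratr _.
have [e0|e0] := ltP 0 e; last first.
  rewrite (_ : ball M e = set0) ?preimage_set0 //.
  by rewrite -subset0 => ? [/lt_le_trans/(_ e0)]; rewrite ltxx.
have -> : f @^-1` ball M e = \bigcap_(ij in [set: 'I_m * 'I_n])
    ((fun t => f t ij.1 ij.2) @^-1` ball (M ij.1 ij.2) e).
  apply/seteqP; split => [t [_ Mt] [i j] _ | t Mt]; first exact: Mt.
  by split => // i j; exact: (Mt (i, j)).
apply: fin_bigcap_measurable; first exact: finite_finset.
move=> [i j] _; rewrite -[X in measurable X]setTI.
apply: mf => //; apply: open_measurable; exact: ball_open.
Qed.

Lemma measurable_mx_set1 m n (a : borel_mx m n) : measurable [set a].
Proof.
rewrite -[X in measurable X]setCK; apply: measurableC; apply: sub_sigma_algebra.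
exact/closed_openC/accessible_closed_set1/hausdorff_accessible/norm_hausdorff.
Qed.

End borel_matrix.

Section row_marginals.
Variable R : realType.
Local Open Scope ereal_scope.

Lemma pushforward_probability d d' (T : measurableType d) (T' : measurableType d')
    (mu : probability T R) (f : T -> T') :
  measurable_fun [set: T] f ->
  exists nu : probability T' R, forall S, nu S = mu (f @^-1` S).
Proof. by move=> mf; exists (distribution mu (mfun_Sub (mem_set mf))). Qed.

Lemma measurable_row n K (j : 'I_n) :
  measurable_fun [set: demands R n K] (fun d : demands R n K => row j d : goods R K).
Proof.
apply: (@measurable_fun_mx R _ _ 1 K) => i k.
by under eq_fun do rewrite mxE; exact: measurable_mx_coord.
Qed.

Lemma measurable_preimage_row n K (j : 'I_n) (S : set (goods R K)) : measurable S ->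
  measurable ((fun d : demands R n K => row j d : goods R K) @^-1` S).
Proof. by move=> mS; rewrite -[X in measurable X]setTI; exact: measurable_row. Qed.

Lemma probability_row_marginals n K (Q : 'I_n -> probability (goods R K) R) :
  exists nu : probability (demands R n K) R, forall j S, measurable S ->
    nu ((fun d : demands R n K => row j d : goods R K) @^-1` S) = Q j S.
Proof.
elim: n Q => [|n IHn] Q; first by exists (@dirac _ (demands R 0 K) 0%R R) => -[].
have [nu nuE] := IHn (fun j => Q (rshift 1 j)).
pose stack (w : goods R K * demands R n K) : demands R (1 + n) K := col_mx w.1 w.2.
have mstack : measurable_fun [set: goods R K * demands R n K] stack.
  apply: (@measurable_fun_mx R _ _ (1 + n) K) => i k; rewrite /stack.
  under eq_fun do rewrite mxE; case: (fintype.split i) => i'.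
    exact: measurableT_comp (measurable_mx_coord _ _) measurable_fst.
  exact: measurableT_comp (measurable_mx_coord _ _) measurable_snd.
have [mu muE] := pushforward_probability (Q ord0 \x nu) mstack.
have stack_hd y d i : row (lshift n i) (stack (y, d)) = y by rewrite /stack rowKu row_id.
have stack_tl y d i : row (rshift 1 i) (stack (y, d)) = row i d by rewrite /stack rowKd.
exists mu => j S mS; rewrite muE -(@splitK 1 n j); case: (@fintype.split 1 n j) => i /=.
  rewrite (_ : _ @^-1` _ = S `*` setT); last first.
    by apply/seteqP; split => -[y d] /=; rewrite stack_hd // => -[].
  transitivity (Q ord0 S * nu setT); first exact: product_measure1E.
  by rewrite probability_setT mule1 (ord1 i); congr (Q _ _); exact: val_inj.
rewrite (_ : _ @^-1` _ = setT `*` ((fun d : demands R n K => row i d : goods R K) @^-1` S)).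
  transitivity (Q ord0 setT * nu ((fun d : demands R n K => row i d : goods R K) @^-1` S)).
    by apply: product_measure1E => //; exact: measurable_preimage_row.
  by rewrite probability_setT mul1e nuE.
by apply/seteqP; split => -[y d] /=; rewrite stack_tl // => -[].
Qed.

End row_marginals.

(** * Finite partitions and conditional probabilities *)

Section finite_partition.
Context d (T : measurableType d) (R : realType) (I : finType) (c : T -> I).
Hypothesis mc : forall i, measurable (c @^-1` [set i]).
Local Open Scope ereal_scope.

Lemma measure_partition (mu : {measure set T -> \bar R}) S : measurable S ->
  mu S = \sum_(i : I) mu (S `&` c @^-1` [set i]).
Proof.
move=> mS; transitivity (mu (\bigcup_i (S `&` c @^-1` [set i]))).
  by congr (mu _); apply/seteqP; split => [x Sx|x [i _ []]//]; exists (c x).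
rewrite measure_fin_bigcup //.
- rewrite (fsbigE (index_enum I)) ?index_enum_uniq //; last by move=> i _; rewrite mem_index_enum.
  by apply: eq_bigl => i; rewrite in_setT.
- exact: finite_finset.
- by move=> i k _ _ [x [[_ <-] [_ <-]]].
- by move=> i _; exact: measurableI.
Qed.

Lemma probability_fibers_le_eq (P Q : probability T R) :
  (forall i, P (c @^-1` [set i]) <= Q (c @^-1` [set i])) ->
  forall i, P (c @^-1` [set i]) = Q (c @^-1` [set i]).
Proof.
move=> PQ i; have mF := mc i; apply/eqP; rewrite eq_le PQ /=.
suff : P (~` (c @^-1` [set i])) <= Q (~` (c @^-1` [set i])).
  rewrite !probability_setC // => /(leeB (lexx 1)).
  by rewrite !oppeB ?addeA ?subee ?add0e ?fin_num_measure.
rewrite (measure_partition P (measurableC mF)) (measure_partition Q (measurableC mF)).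
apply: lee_sum => k _; have [->|ki] := eqVneq k i; first by rewrite setICl !measure0.
rewrite (_ : _ `&` _ = c @^-1` [set k]) ?PQ //; apply/setIidr => x /= ->.
exact/eqP.
Qed.

Lemma measurable_fin_preimage (X : set I) : measurable (c @^-1` X).
Proof.
rewrite (_ : c @^-1` X = \bigcup_(i in X) c @^-1` [set i]).
  by apply: fin_bigcup_measurable => //; exact: finite_finset.
by apply/seteqP; split => [x Xx|x [i Xi /= ->//]]; exists (c x).
Qed.

Lemma measurable_fun_switch d' (T' : measurableType d') (g : I -> T -> T') :
  (forall i, measurable_fun [set: T] (g i)) ->
  measurable_fun [set: T] (fun x => g (c x) x).
Proof.
move=> mg _ B mB; rewrite setTI.
rewrite (_ : _ @^-1` B = \bigcup_(i in [set: I]) (c @^-1` [set i] `&` g i @^-1` B)).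
  apply: fin_bigcup_measurable => [|i _]; first exact: finite_finset.
  by apply: measurableI => //; rewrite -[X in measurable X]setTI; exact: mg.
by apply/seteqP; split => [x Bx|x [i _ [/= -> //]]]; exists (c x).
Qed.

End finite_partition.

Section conditional_probability.
Context d (T : measurableType d) (R : realType).
Local Open Scope ereal_scope.

(* When [Q B = 0], [mnormalize] falls back to [Q] itself; [cond_probM] holds anyway. *)
Definition cond_prob (Q : probability T R) (B : set T) (mB : measurable B) :
  probability T R := mnormalize (mrestr Q mB) Q.

Lemma cond_probM (Q : probability T R) (B : set T) (mB : measurable B) S :
  measurable S -> Q B * cond_prob Q mB S = Q (S `&` B).
Proof.
move=> mS; rewrite /cond_prob /= /mnormalize /= /mrestr setTI.
have QBfin : Q B \is a fin_num by exact: fin_num_measure.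
case: ifPn => [/orP[/eqP QB0|/eqP QBoo]|] /=.
- rewrite QB0 mul0e; apply/esym/eqP; rewrite -measure_le0 -QB0.
  by apply: le_measure; rewrite ?inE //; exact: measurableI.
- by rewrite QBoo in QBfin.
rewrite negb_or => /andP[QB0 _].
by rewrite muleCA -{1}(fineK QBfin) -EFinM divff ?mule1 // fine_eq0.
Qed.

Lemma probability_setI_eq1 (Q : probability T R) (B X : set T) :
  measurable B -> measurable X -> Q B = 1 -> Q (X `&` B) = Q X.
Proof.
move=> mB mX QB1; rewrite [RHS](measureDI Q mX mB) -[LHS]add0e; congr (_ + _).
apply/esym/eqP; rewrite eq_le measure_ge0 andbT.
have <- : Q (~` B) = 0 by rewrite probability_setC // QB1 subee.
by apply: le_measure; rewrite ?inE //; [exact: measurableD | exact: measurableC].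
Qed.

Lemma probability_bigcap_eq1 (Q : probability T R) (I : finType) (E : I -> set T) :
  (forall i, measurable (E i)) -> (forall i, Q (E i) = 1) -> Q (\bigcap_i E i) = 1.
Proof.
move=> mE QE; have -> : [set: I] = [set` index_enum I].
  by apply/seteqP; split => // i _; exact: mem_index_enum.
rewrite bigcap_seq.
elim: (index_enum I) => [|i r IHr]; first by rewrite big_nil probability_setT.
rewrite big_cons probability_setI_eq1 //; exact: bigsetI_measurable.
Qed.

End conditional_probability.

(** * Rationalizability through utility levels *)

Section utility_levels.
Variables (R : realType) (J K : nat) (p : 'I_J -> 'rV[R]_K).
Hypothesis p_pos : forall j, strictly_pos (p j).

Lemma dotp_ge0 (q x : 'rV[R]_K) : strictly_pos q -> nonneg x -> 0 <= dotp q x.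
Proof. by move=> q0 x0; apply: sumr_ge0 => i _; rewrite mulr_ge0 // ltW. Qed.

Lemma dotp_lt (q x y : 'rV[R]_K) : strictly_pos q ->
  (forall i, x 0 i <= y 0 i) -> x <> y -> dotp q x < dotp q y.
Proof.
move=> q0 xy nxy; have [i0 xi0] : exists i, x 0 i < y 0 i.
  apply/not_existsP => H; apply: nxy; apply/rowP => i.
  by apply/eqP; rewrite eq_le xy leNgt; exact/negP/H.
rewrite /dotp (bigD1 i0) //= [X in _ < X](bigD1 i0) //=.
by apply: ltr_leD; [rewrite ltr_pM2l | apply: ler_sum => i _; rewrite ler_pM2l].
Qed.

Lemma budget_above (k : 'I_J) (x : 'rV[R]_K) : (0 < K)%N ->
  nonneg x -> dotp (p k) x < 1 ->
  exists y, [/\ budget p k y, forall i, x 0 i <= y 0 i & x <> y].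
Proof.
move=> K0 x0 xk; pose i0 := Ordinal K0; have pk0 := p_pos k i0.
pose c := (1 - dotp (p k) x) / p k 0 i0.
have c0 : 0 < c by rewrite divr_gt0 // subr_gt0.
pose y := \row_i (x 0 i + (i == i0)%:R * c).
have xy i : x 0 i <= y 0 i by rewrite mxE lerDl mulr_ge0 ?ler0n ?ltW.
exists y; split => //; first split.
- by move=> i; exact: le_trans (x0 i) (xy i).
- rewrite /dotp; under eq_bigr do rewrite mxE mulrDr.
  rewrite big_split /= -/(dotp (p k) x) (bigD1 i0) //= big1 => [|i /negPf ->]; last first.
    by rewrite mul0r mulr0.
  by rewrite mul1r addr0 /c mulrCA divff ?mulr1 ?gt_eqF //; lra.
- by move/rowP/(_ i0); rewrite mxE eqxx mul1r; lra.
Qed.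

Definition utility_levels (d : 'M[R]_(J, K)) (U : 'I_J -> R) :=
  forall j k, (dotp (p k) (row j d) = 1 -> U j <= U k) /\
              (dotp (p k) (row j d) < 1 -> U j < U k).

Lemma rationalizable_utility_levels d : (0 < K)%N ->
  rationalizable p d -> exists U, utility_levels d U.
Proof.
move=> K0 [u [u_incr du]]; exists (fun j => u (row j d)) => j k.
have [[d_nn _] _] := du j.
split=> [djk|djk]; first by apply: (du k).2; split.
have [y [yk dy ndy]] := budget_above K0 d_nn djk.
by apply: lt_le_trans (u_incr _ _ d_nn yk.1 dy ndy) _; exact: (du k).2.
Qed.

Section levels_rationalizable.
Variables (U : 'I_J -> R) (J0 : (0 < J)%N).

(* [level_path k] is increasing with value [U k] at [1]; below [1] it stays above
   every level smaller than [U k], above [1] above every level. *)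
Let below k := \big[Order.max/(U k - 1)]_(j | U j < U k) U j.

Let below_lt k : below k < U k.
Proof. by apply: bigmax_lt => //; rewrite gtrBl. Qed.

Let le_below j k : U j < U k -> U j <= below k.
Proof. by move=> jk; apply: le_bigmax_cond. Qed.

Let level_path k t :=
  if t <= 1 then below k + t * (U k - below k) else \sum_j `|U j| + t.

Let level_path1 k : level_path k 1 = U k.
Proof. by rewrite /level_path lexx mul1r addrC subrK. Qed.

Let level_path_lt k s t : s < t -> level_path k s < level_path k t.
Proof.
move=> st; have := below_lt k; have : U k <= \sum_j `|U j|.
  by rewrite (le_trans (ler_norm _)) // (bigD1 k) //= lerDl sumr_ge0.
rewrite /level_path; case: ifPn => s1; case: ifPn => t1 Usum bk.
- by rewrite ltrD2l ltr_pM2r // subr_gt0.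
- rewrite -ltNge in t1; nra.
- by move: s1; rewrite -ltNge => s1; move: (lt_trans s1 st); rewrite ltNge t1.
- by rewrite ltrD2l.
Qed.

Let level_path_ge j k t : 0 <= t ->
  (t = 1 -> U j <= U k) -> (t < 1 -> U j < U k) -> U j <= level_path k t.
Proof.
move=> t0 eq1 lt1; rewrite /level_path; case: ifPn => [|]; last first.
  rewrite -ltNge => t1; rewrite (le_trans (ler_norm _)) // (bigD1 j) //= -addrA lerDl.
  by rewrite addr_ge0 ?sumr_ge0 // ltW // (lt_trans _ t1).
rewrite le_eqVlt => /orP[/eqP t1|t1]; first by rewrite t1 mul1r addrC subrK; exact: eq1.
apply: le_trans (le_below (lt1 t1)) _; rewrite lerDl mulr_ge0 // subr_ge0.
exact/ltW/below_lt.
Qed.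

Let k0 := Ordinal J0.

Let afriat_index x := [arg min_(k < k0) level_path k (dotp (p k) x)]%O.

Let afriat_utility x := level_path (afriat_index x) (dotp (p (afriat_index x)) x).

Let afriat_utility_le x k : afriat_utility x <= level_path k (dotp (p k) x).
Proof. by rewrite /afriat_utility /afriat_index; case: arg_minP => // i _; apply. Qed.

Lemma levels_rationalizable d : (forall j, budget p j (row j d)) ->
  utility_levels d U -> rationalizable p d.
Proof.
move=> dB dU; exists afriat_utility; split.
  move=> x y x0 y0 xy nxy; rewrite {2}/afriat_utility; set k := afriat_index y.
  exact/(le_lt_trans (afriat_utility_le x k))/level_path_lt/dotp_lt.
move=> j; split => // x [x0 xj]; rewrite {2}/afriat_utility.
apply: le_trans (afriat_utility_le x j) _; rewrite xj level_path1.
set k := afriat_index _; have [dj0 _] := dB j.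
by apply: level_path_ge; [exact: dotp_ge0 | exact: (dU j k).1 | exact: (dU j k).2].
Qed.
End levels_rationalizable.

(* [sides y] encodes the sign vector of [(p_k'y - 1)_k]; its fibers are the cells,
   and a patch is a cell intersected with a budget plane ([patch_ofE]). *)
Definition sides (y : 'rV[R]_K) : {ffun 'I_J -> bool * bool} :=
  [ffun k => (dotp (p k) y < 1, dotp (p k) y == 1)].

Lemma utility_levels_sides d d' U :
  (forall j, sides (row j d') = sides (row j d)) ->
  utility_levels d U -> utility_levels d' U.
Proof.
move=> dd' dU j k; have /ffunP/(_ k) := dd' j; rewrite !ffunE => -[lt1 eq1].
split=> [/eqP|]; first by rewrite eq1 => /eqP; exact: (dU j k).1.
by rewrite lt1; exact: (dU j k).2.
Qed.

Lemma rationalizable_sides d d' : (0 < J)%N -> (0 < K)%N ->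
  rationalizable p d -> (forall j, budget p j (row j d')) ->
  (forall j, sides (row j d') = sides (row j d)) -> rationalizable p d'.
Proof.
move=> J0 K0 /(rationalizable_utility_levels K0)[U dU] d'B dd'.
exact/(levels_rationalizable J0 d'B)/(utility_levels_sides dd').
Qed.

End utility_levels.

(** * Patches *)

Section patches.
Variables (R : realType) (J K : nat) (p : 'I_J -> 'rV[R]_K).

Lemma measurable_dotp (q : 'rV[R]_K) : measurable_fun [set: goods R K] (dotp q).
Proof.
apply: measurable_sum => i; apply: measurable_funM => //.
exact: (@measurable_mx_coord R 1 K 0 i).
Qed.

Lemma measurable_sides_fiber s : measurable (sides p @^-1` [set s] : set (goods R K)).
Proof.
have -> : sides p @^-1` [set s] = \bigcap_(k in [set: 'I_J])
    ((fun y : goods R K => dotp (p k) y < 1) @^-1` [set (s k).1] `&`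
     (fun y : goods R K => dotp (p k) y == 1) @^-1` [set (s k).2]).
  apply/seteqP; split => [y <- k _|y ys]; first by rewrite /= ffunE.
  by apply/ffunP => k; rewrite ffunE; have [/= -> ->] := ys k I; case: (s k).
apply: fin_bigcap_measurable => [|k _]; first exact: finite_finset.
have m1 := @measurable_cst _ _ (goods R K) R setT 1.
have mlt := measurable_fun_ltr (measurable_dotp (p k)) m1.
have meq := measurable_fun_eqr (measurable_dotp (p k)) m1.
apply: measurableI; rewrite -[X in measurable X]setTI.
- exact: (mlt measurableT [set (s k).1] I).
- exact: (meq measurableT [set (s k).2] I).
Qed.

Lemma measurable_budget j : measurable (budget p j : set (goods R K)).
Proof.
have -> : budget p j = \bigcap_(i in [set: 'I_K])
    ((fun y : goods R K => y 0 i) @^-1` `[0, +oo[) `&` dotp (p j) @^-1` [set 1].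
  apply/seteqP; split => [y [y0 yj]|y [y0 yj]]; split => // i.
    by move=> _ /=; rewrite in_itv /= andbT.
  by have := y0 i I; rewrite /= in_itv /= andbT.
apply: measurableI; last by rewrite -[X in measurable X]setTI; exact: measurable_dotp.
apply: fin_bigcap_measurable => [|i _]; first exact: finite_finset.
by rewrite -[X in measurable X]setTI; exact: (@measurable_mx_coord R 1 K 0 i).
Qed.

Lemma sgr_subr1_eq (a b : R) :
  Num.sg (a - 1) = Num.sg (b - 1) <-> (a < 1, a == 1) = (b < 1, b == 1).
Proof.
have sgE (c : R) : Num.sg (c - 1) = if c < 1 then -1 else if c == 1 then 0 else 1.
  by case: ltrgtP => c1; [apply: ltr0_sg | apply: gtr0_sg | rewrite c1 subrr sgr0];
    rewrite ?subr_lt0 ?subr_gt0.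
by rewrite !sgE; case: ltrgtP => a1; case: ltrgtP => b1; split => // h;
  first [by case: h | exfalso; lra].
Qed.

Lemma sign_vector_sides (y z : 'rV[R]_K) :
  sign_vector p z = sign_vector p y <-> sides p z = sides p y.
Proof.
split=> [yz|/ffunP yz].
  by apply/ffunP => k; rewrite !ffunE; apply/sgr_subr1_eq/(congr1 (@^~ k) yz).
by apply/funext => k; apply/sgr_subr1_eq; have := yz k; rewrite !ffunE.
Qed.

Lemma patch_ofE j (y : 'rV[R]_K) : budget p j y ->
  patch_of p y = sides p @^-1` [set sides p y] `&` budget p j.
Proof.
move=> [y0 yj]; apply/seteqP; split => z.
  move=> [[k [z0 _]] /sign_vector_sides zy]; split => //; split => //; apply/eqP.
  by have /ffunP/(_ j) := zy; rewrite !ffunE yj eqxx => -[_ ->].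
by move=> [/= zy zB]; split; [exists j | exact/sign_vector_sides].
Qed.

Lemma measurable_patch_of (y : 'rV[R]_K) : measurable (patch_of p y : set (goods R K)).
Proof.
have -> : patch_of p y =
    (\bigcup_(j in [set: 'I_J]) budget p j) `&` sides p @^-1` [set sides p y].
  apply/seteqP; split => [z [[j zj] zy]|z [[j _ zj] zy]].
    by split; [exists j | exact/sign_vector_sides].
  by split; [exists j | exact/sign_vector_sides].
apply: measurableI; last exact: measurable_sides_fiber.
by apply: fin_bigcup_measurable => [|j _]; [exact: finite_finset | exact: measurable_budget].
Qed.

Lemma le_patches_sides_fiber (P Q : probability (goods R K) R) j s :
  P (budget p j) = 1%E ->
  (forall x, is_patch p x -> x `<=` budget p j -> (P x <= Q x)%E) ->
  (P (sides p @^-1` [set s]) <= Q (sides p @^-1` [set s]))%E.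
Proof.
move=> PB PQ; have mF := measurable_sides_fiber s.
rewrite -(probability_setI_eq1 (measurable_budget j) mF PB).
have [[y [/= ys yB]]|] := pselect (exists y, (sides p @^-1` [set s] `&` budget p j) y).
  have Fy : sides p @^-1` [set s] `&` budget p j = patch_of p y.
    by rewrite (patch_ofE yB) ys.
  rewrite Fy; apply: le_trans (PQ _ _ _) _.
  - by exists y; split => //; exists j.
  - by rewrite -Fy; exact: subIsetr.
  rewrite -Fy; apply: le_measure; rewrite ?inE //.
  exact: measurableI (measurable_budget j).
move=> noF; rewrite (_ : _ `&` _ = set0) ?measure0 ?measure_ge0 //.
by apply/seteqP; split => // y yF; apply: noF; exists y.
Qed.

End patches.

(** * Resampling within cells *)

Section resampling.
Variables (R : realType) (J K : nat) (p : 'I_J -> 'rV[R]_K).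

Local Notation cell := {ffun 'I_J -> bool * bool}.
Local Notation F s := (sides p @^-1` [set s] : set (goods R K)).
Local Notation rowp j := (fun d : demands R _ K => row j d : goods R K).
Let N := #|{: 'I_J * cell}|.

Definition cell_index j s : 'I_N := enum_rank (j, s).

(* Under [mu \x nu] below, row [j] of [resample] is redrawn from [Q j] conditioned
   on the cell of the original row [j]. *)
Definition resample (w : demands R J K * demands R N K) : demands R J K :=
  \matrix_(j, k)
    (w.2 : 'M[R]_(N, K)) (cell_index j (sides p (row j (w.1 : 'M[R]_(J, K))))) k.

Definition row_sides (d : 'M[R]_(J, K)) : {ffun 'I_J -> cell} :=
  [ffun j => sides p (row j d)].

Lemma measurable_row_sides_fiber v :
  measurable (row_sides @^-1` [set v] : set (demands R J K)).
Proof.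
rewrite (_ : _ @^-1` _ = \bigcap_(j in [set: 'I_J]) (rowp j @^-1` F (v j))).
  apply: fin_bigcap_measurable => [|j _]; first exact: finite_finset.
  exact: measurable_preimage_row (measurable_sides_fiber p _).
apply/seteqP; split => [d <- j _|d dv]; first by rewrite /= ffunE.
by apply/ffunP => j; rewrite ffunE; exact: dv.
Qed.

Let cell_of j (w : demands R J K * demands R N K) := sides p (row j (w.1 : 'M[R]_(J, K))).

Let row_resample j w :
  row j (resample w) = row (cell_index j (cell_of j w)) (w.2 : 'M[R]_(N, K)).
Proof. by apply/rowP => k; rewrite !mxE. Qed.

Let measurable_cell_of j s : measurable (cell_of j @^-1` [set s]).
Proof.
rewrite (_ : _ @^-1` _ = (rowp j @^-1` (F s)) `*` setT).
  by apply: measurableX => //; exact: measurable_preimage_row (measurable_sides_fiber p s).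
by apply/seteqP; split => -[a b] //= [].
Qed.

Lemma measurable_resample : measurable_fun [set: demands R J K * demands R N K] resample.
Proof.
apply: measurable_fun_mx => j k.
have -> : (fun w => resample w j k) =
    (fun w => (w.2 : 'M[R]_(N, K)) (cell_index j (cell_of j w)) k).
  by apply/funext => w; rewrite mxE.
apply: (measurable_fun_switch (measurable_cell_of j)
  (g := fun s w => (w.2 : 'M[R]_(N, K)) (cell_index j s) k)) => s.
exact: measurableT_comp (measurable_mx_coord _ _) measurable_snd.
Qed.

Let measurable_preimage_resample j S : measurable S ->
  measurable ((rowp j \o resample) @^-1` S).
Proof.
move=> mS; rewrite comp_preimage -[X in measurable X]setTI.
by apply: measurable_resample => //; exact: measurable_preimage_row.
Qed.

Section coupling.
Variables (P Q : 'I_J -> probability (goods R K) R).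
Variables (mu : probability (demands R J K) R) (nu : probability (demands R N K) R).
Hypothesis Q_budget : stoch_demand_system p Q.
Hypothesis PQ : forall j s, P j (F s) = Q j (F s).
Hypothesis mu_marg : forall j S, measurable S -> mu (rowp j @^-1` S) = P j S.
Hypothesis nu_marg : forall j s S, measurable S ->
  nu (rowp (cell_index j s) @^-1` S) = cond_prob (Q j) (measurable_sides_fiber p s) S.
Local Open Scope ereal_scope.

Let resample_cell j s S : measurable S ->
  (mu \x nu) (cell_of j @^-1` [set s] `&` (rowp j \o resample) @^-1` S) = Q j (S `&` F s).
Proof.
move=> mS; rewrite (_ : _ `&` _ = (rowp j @^-1` F s) `*` (rowp (cell_index j s) @^-1` S)).
  transitivity (mu (rowp j @^-1` F s) * nu (rowp (cell_index j s) @^-1` S)).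
    apply: product_measure1E; apply: measurable_preimage_row => //.
    exact: measurable_sides_fiber.
  by rewrite mu_marg ?nu_marg ?PQ ?cond_probM //; exact: measurable_sides_fiber.
by apply/seteqP; split => -[a b] [/= <-]; rewrite row_resample.
Qed.

Lemma resample_marginal j S : measurable S ->
  (mu \x nu) ((rowp j \o resample) @^-1` S) = Q j S.
Proof.
move=> mS; rewrite (measure_partition (measurable_cell_of j));
  last exact: measurable_preimage_resample.
rewrite [RHS](measure_partition (measurable_sides_fiber p)) //.
by apply: eq_bigr => s _; rewrite setIC; exact: resample_cell.
Qed.

Let stays j := \bigcup_s
  (cell_of j @^-1` [set s] `&` (rowp j \o resample) @^-1` (F s `&` budget p j)).

Let staysP j w : stays j w ->
  budget p j (row j (resample w)) /\ sides p (row j (resample w)) = cell_of j w.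
Proof. by move=> [s _ [/= -> [/= ? ?]]]. Qed.

Let measurable_stays j : measurable (stays j).
Proof.
apply: fin_bigcup_measurable => [|s _]; first exact: finite_finset.
apply: measurableI (measurable_cell_of j s) _; apply: measurable_preimage_resample.
by apply: measurableI; [exact: measurable_sides_fiber | exact: measurable_budget].
Qed.

Let stays1 j : (mu \x nu) (stays j) = 1.
Proof.
rewrite (measure_partition (measurable_cell_of j)) //.
rewrite -(Q_budget j).
rewrite [RHS](measure_partition (measurable_sides_fiber p) _ (measurable_budget p j)).
apply: eq_bigr => s _.
have -> : budget p j `&` F s = (F s `&` budget p j) `&` F s by rewrite setIAC setIid setIC.
rewrite (_ : stays j `&` _ =
    cell_of j @^-1` [set s] `&` (rowp j \o resample) @^-1` (F s `&` budget p j)).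
  apply: resample_cell; apply: measurableI; first exact: measurable_sides_fiber.
  exact: measurable_budget.
apply/seteqP; split => [w [[t _ [/= -> Rw]] /= ts]|w [/= ws Rw]]; first by subst t.
by split => //; exists s.
Qed.

Hypotheses (J0 : (0 < J)%N) (K0 : (0 < K)%N) (p_pos : forall j, strictly_pos (p j)).

Lemma resample_rationalizable (A : set (demands R J K)) :
  measurable A -> A `<=` rationalizable p -> mu A = 1 ->
  exists2 A' : set (demands R J K), measurable A' /\ A' `<=` rationalizable p &
    (mu \x nu) (resample @^-1` A') = 1.
Proof.
move=> mA Arat muA.
pose A' : set (demands R J K) := row_sides @^-1` (row_sides @` A) `&`
  \bigcap_(j in [set: 'I_J]) (rowp j @^-1` budget p j).
have mA' : measurable A'.
  apply: measurableI; first exact: measurable_fin_preimage measurable_row_sides_fiber _.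
  apply: fin_bigcap_measurable => [|j _]; first exact: finite_finset.
  exact: measurable_preimage_row (measurable_budget p j).
exists A'.
  split=> // d [[d0 Ad0 d0d] dB]; apply: (rationalizable_sides p_pos J0 K0 (Arat _ Ad0)) => j.
    exact: dB.
  by move/ffunP: d0d => /(_ j); rewrite !ffunE.
have fstA : fst @^-1` A = A `*` [set: demands R N K].
  by apply/seteqP; split => -[a b] //= [].
have mgood : measurable (fst @^-1` A `&` \bigcap_j stays j).
  apply: measurableI; first by rewrite fstA; exact: measurableX.
  by apply: fin_bigcap_measurable => [|j _]; [exact: finite_finset | exact: measurable_stays].
have mpre : measurable (resample @^-1` A').
  by rewrite -[X in measurable X]setTI; exact: measurable_resample.
apply/eqP; rewrite eq_le probability_le1 //=.
have <- : (mu \x nu) (fst @^-1` A `&` \bigcap_j stays j) = 1.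
  rewrite probability_setI_eq1 //.
  - rewrite fstA; transitivity (mu A * nu setT); first exact: product_measure1E.
    by rewrite muA probability_setT mule1.
  - by apply: fin_bigcap_measurable => [|j _]; [exact: finite_finset | exact: measurable_stays].
  - by rewrite fstA; exact: measurableX.
  - exact: probability_bigcap_eq1 measurable_stays stays1.
apply: le_measure; rewrite ?inE // => w [Aw stay]; split.
  exists w.1 => //; apply/ffunP => j; rewrite !ffunE.
  by have [_ ->] := staysP (stay j I).
by move=> j _; exact: (staysP (stay j I)).1.
Qed.

End coupling.

Theorem stoch_rationalizable_cells (P Q : 'I_J -> probability (goods R K) R) :
  (0 < J)%N -> (0 < K)%N -> (forall j, strictly_pos (p j)) ->
  stoch_demand_system p Q -> (forall j s, P j (F s) = Q j (F s)) ->
  stoch_rationalizable p P -> stoch_rationalizable p Q.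
Proof.
move=> J0 K0 p_pos QB PQ [mu [[A [mA [Arat muA]]] mu_marg]].
have [nu nu_marg] := probability_row_marginals (fun i : 'I_N =>
  cond_prob (Q (enum_val i).1) (measurable_sides_fiber p (enum_val i).2)).
have nu_cells j s S : measurable S -> nu (rowp (cell_index j s) @^-1` S) =
    cond_prob (Q j) (measurable_sides_fiber p s) S.
  by move=> mS; rewrite nu_marg // /cell_index enum_rankK.
have [mu' mu'E] := pushforward_probability (mu \x nu)%E measurable_resample.
exists mu'; split; last by move=> j S mS; rewrite mu'E; exact: resample_marginal.
have [A' [mA' A'rat] muA'] :=
  resample_rationalizable QB PQ mu_marg nu_cells J0 K0 p_pos mA Arat muA.
by exists A'; rewrite mu'E.
Qed.

End resampling.

Theorem proposition1 (R : realType) (J K : nat)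
  (hJ : (0 < J)%N) (hK : (0 < K)%N)
  (p : 'I_J -> 'rV[R]_K) (hp : forall j, strictly_pos (p j))
  (P : 'I_J -> probability (goods R K) R)
  (hP : stoch_demand_system p P) :
  (forall Pstar : 'I_J -> probability (goods R K) R,
     stoch_demand_system p Pstar ->
     (forall (j : 'I_J) (x : set 'rV[R]_K), is_patch p x -> x `<=` budget p j ->
        P j x = Pstar j x) ->
     (stoch_rationalizable p P <-> stoch_rationalizable p Pstar)) /\
  (forall ystar : set 'rV[R]_K -> 'rV[R]_K,
     (forall x, is_patch p x -> x (ystar x)) ->
     forall Pstar : 'I_J -> probability (goods R K) R,
     stoch_demand_system p Pstar ->
     (forall (j : 'I_J) (x : set 'rV[R]_K), is_patch p x -> x `<=` budget p j ->
        Pstar j [set ystar x] = P j x) ->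
     (stoch_rationalizable p P <-> stoch_rationalizable p Pstar)).
Proof.
have transfer Pstar : stoch_demand_system p Pstar ->
    (forall j x, is_patch p x -> x `<=` budget p j -> (P j x <= Pstar j x)%E) ->
    (stoch_rationalizable p P <-> stoch_rationalizable p Pstar).
  move=> hPs le_patches.
  have cellsE j : forall s, P j (sides p @^-1` [set s]) = Pstar j (sides p @^-1` [set s]).
    apply: probability_fibers_le_eq => [|s]; first exact: measurable_sides_fiber.
    exact: le_patches_sides_fiber (hP j) (le_patches j).
  by split; apply: stoch_rationalizable_cells.
split=> [Pstar hPs PPs|ystar ystarP Pstar hPs PsP]; apply: transfer => // j x px xB.
  by rewrite PPs.
rewrite -PsP //; apply: le_measure; rewrite ?inE.
- exact: measurable_mx_set1.
- by case: px => y [_ ->]; exact: measurable_patch_of.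
- by move=> _ ->; exact: ystarP.
Qed.
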